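(* Let $A$ be a general metric space. (a) If $\mathcal F$ is a weakly flat filter on $A$ then $M^-(\mathcal F)$ is a $\mathcal P_1$-flat left module; if $\mathcal F$ is flat then $M^-(\mathcal F)$ is $\mathcal P_2$-flat. (b) If $M$ is a $\mathcal P_1$-flat left module then $\mathcal F(M)$ is a weakly flat filter on $A$ (with filter basis $\{\Gamma(M)(\epsilon):\epsilon>0\}$); if $M$ is $\mathcal P_2$-flat then $\mathcal F(M)$ is flat. (c) Both assignments are monotone: $\mathcal F_1\supseteq\mathcal F_2$ implies $M^-(\mathcal F_1)\Rightarrow M^-(\mathcal F_2)$, and $M_1\Rightarrow M_2$ implies $\mathcal F(M_1)\supseteq\mathcal F(M_2)$. (d) For every weakly flat filter $\mathcal F$ and every left module $M$: $\mathcal F\supseteq\mathcal F(M)$ iff $M^-(\mathcal F)\Rightarrow M$. (e) For every $\mathcal P_1$-flat left module $M$, $M^-(\mathcal F(M))=M$. Consequently, with $\mathrm{WFil}(A)$ (resp. $\mathrm{FFil}(A)$) the preorder of weakly flat (resp. flat) filters ordered by reverse inclusion, $\mathcal F\mapsto M^-(\mathcal F)$ is a reflector $\mathrm{WFil}(A)\to\mathrm{Flat}_{\mathcal P_1}(A)_0$ (resp. $\mathrm{FFil}(A)\to\mathrm{Flat}_{\mathcal P_2}(A)_0$) whose right adjoint $M\mapsto\mathcal F(M)$ is full (and injective).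
   Context: $\bar{\mathbb R}_+=[0,\infty]$ is the symmetric monoidal closed category with an arrow $x\to y$ iff $x\ge y$, tensor $+$ ($x+\infty=\infty$), unit $0$, internal hom $[x,y]=\max(y-x,0)$ for finite $x,y$, $[x,\infty]=\infty$ for $x<\infty$, $[\infty,y]=0$; $\inf\emptyset=\infty$, $\sup\emptyset=0$. A general metric space $A$ is a set with $A(-,-):A\times A\to[0,\infty]$ such that $A(x,x)=0$ and $A(x,z)\le A(x,y)+A(y,z)$ (no symmetry or separation assumed). A left module on $A$ is a map $M:A\to[0,\infty]$ with $M(x)\le M(y)+A(x,y)$ for all $x,y$; a right module is $N:A\to[0,\infty]$ with $N(y)\le A(x,y)+N(x)$. For left modules, $M\Rightarrow M'$ means $M(x)\ge M'(x)$ for all $x$. A left module $M$ is $\mathcal P_1$-flat iff (F1) $\inf_x M(x)=0$ and (F3) for every $v\in[0,\infty]$ and every right module $N$, $\inf_x(M(x)+[v,N(x)])=[v,\inf_x(M(x)+N(x))]$; $M$ is $\mathcal P_2$-flat iff (F3) holds and (F2) for every finite (possibly empty) family $(N_i)_{i\in I}$ of right modules, $\inf_x(M(x)+\max_i N_i(x))=\max_i\inf_x(M(x)+N_i(x))$ (max of the empty family is $0$). (These are the specialisations of enriched $\mathcal P_1$-/$\mathcal P_2$-flatness, $\mathcal P_1$ = weights on the empty or unit category, $\mathcal P_2$ = weights on categories with finitely many objects.) $\mathrm{Flat}_{\mathcal P_k}(A)_0$ is the preorder of $\mathcal P_k$-flat left modules under $\Rightarrow$. A filter on $A$ is a nonempty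 set of nonempty subsets closed under finite intersections and supersets. For $t:A\to[0,\infty]$, $\lim^+_{\mathcal F}t=\inf_{f\in\mathcal F}\sup_{x\in f}t(x)$ and $\lim^-_{\mathcal F}t=\sup_{f\in\mathcal F}\inf_{x\in f}t(x)$. $M^-(\mathcal F)$ is the left module $x\mapsto\lim^-_{y\in\mathcal F}A(x,y)$. $\mathcal F$ is weakly flat iff $\lim^+_{\mathcal F}M^-(\mathcal F)=0$, equivalently: for every $\epsilon>0$ there is $f\in\mathcal F$ such that for all $x\in f$ and all $g\in\mathcal F$ there is $y\in g$ with $A(x,y)\le\epsilon$. $\mathcal F$ is flat iff for every $\epsilon>0$ there is $f\in\mathcal F$ such that for every finite family $x_1,\dots,x_n\in f$ and every $g\in\mathcal F$ there is $y\in g$ with $A(x_i,y)\le\epsilon$ for all $i$. For a left module $M$, $\Gamma(M)(\epsilon)=\{x\in A: M(x)\le\epsilon\}$ and $\mathcal F(M)$ is the set of subsets of $A$ containing some $\Gamma(M)(\epsilon)$ with $\epsilon>0$. *)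

(* [0,oo] is modelled inside \bar R (R : realType),
   all relevant functions are required to be nonnegative. *)
From HB Require Import structures.
From mathcomp Require Import all_boot all_order all_algebra.
From mathcomp Require Import all_classical all_reals ereal.
Set Implicit Arguments. Unset Strict Implicit. Unset Printing Implicit Defensive.
Import Order.TTheory GRing.Theory Num.Theory.
Local Open Scope classical_set_scope.
Local Open Scope ereal_scope.

Section Defs.
Context {R : realType} {A : Type}.

Definition ehom (x y : \bar R) : \bar R :=
  if x == +oo then 0 else if y == +oo then +oo else maxe (y - x) 0.

Definition gmetric (d : A -> A -> \bar R) : Prop :=
  [/\ forall x y, 0 <= d x y, forall x, d x x = 0
    & forall x y z, d x z <= d x y + d y z].

Definition leftmod (d : A -> A -> \bar R) (M : A -> \bar R) : Prop :=
  (forall x, 0 <= M x) /\ (forall x y, M x <= M y + d x y).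

Definition rightmod (d : A -> A -> \bar R) (N : A -> \bar R) : Prop :=
  (forall x, 0 <= N x) /\ (forall x y, N y <= d x y + N x).

Definition mimpl (M M' : A -> \bar R) : Prop := forall x, M' x <= M x.

Definition einf (f : A -> \bar R) : \bar R := ereal_inf (range f).

Definition fmax (n : nat) (e : 'I_n -> \bar R) : \bar R := \big[maxe/0]_(i < n) e i.

Definition F1 (M : A -> \bar R) : Prop := einf M = 0.

Definition F2 (d : A -> A -> \bar R) (M : A -> \bar R) : Prop :=
  forall (n : nat) (N : 'I_n -> A -> \bar R), (forall i, rightmod d (N i)) ->
    einf (fun x => M x + fmax (fun i => N i x)) = fmax (fun i => einf (fun x => M x + N i x)).

Definition F3 (d : A -> A -> \bar R) (M : A -> \bar R) : Prop :=
  forall (v : \bar R) (N : A -> \bar R), 0 <= v -> rightmod d N ->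
    einf (fun x => M x + ehom v (N x)) = ehom v (einf (fun x => M x + N x)).

Definition P1flat d M : Prop := [/\ leftmod d M, F1 M & F3 d M].
Definition P2flat d M : Prop := [/\ leftmod d M, F2 d M & F3 d M].

Definition is_filter (F : set (set A)) : Prop :=
  [/\ F !=set0, (forall f, F f -> f !=set0),
      (forall f g, F f -> F g -> F (f `&` g))
    & (forall f g, F f -> f `<=` g -> F g)].

Definition limplus (F : set (set A)) (t : A -> \bar R) : \bar R :=
  ereal_inf [set ereal_sup (t @` f) | f in F].
Definition limminus (F : set (set A)) (t : A -> \bar R) : \bar R :=
  ereal_sup [set ereal_inf (t @` f) | f in F].

Definition Mminus (d : A -> A -> \bar R) (F : set (set A)) : A -> \bar R :=
  fun x => limminus F (fun y => d x y).

Definition weakly_flat d (F : set (set A)) : Prop :=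
  is_filter F /\ limplus F (Mminus d F) = 0.

Definition flat d (F : set (set A)) : Prop :=
  is_filter F /\
  forall eps : R, (0 < eps)%R -> exists f, F f /\
    forall (n : nat) (xs : 'I_n -> A), (forall i, f (xs i)) ->
      forall g, F g -> exists y, g y /\ forall i, d (xs i) y <= eps%:E.

Definition Gamma (M : A -> \bar R) (eps : R) : set A := [set x | M x <= eps%:E].

Definition FM (M : A -> \bar R) : set (set A) :=
  [set g | exists eps : R, (0 < eps)%R /\ Gamma M eps `<=` g].

End Defs.

(* The internal hom [v, -] of [0, oo] is right adjoint to v + -, so a
   statement [ehom v c <= z] is a statement [c <= v + z].  For a filter F,
   M^-(F) x is small exactly when F eventually contains points close to x;
   (weak) flatness says that M^-(F) is uniformly small on some member of F,
   and this lets one move a near-minimiser of M^-(F) + N into any member of F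
   at the price of a few epsilons, which gives F1-F3.  Conversely, for a flat
   module M the axiom F3 applied to the right module d x yields points y with
   M y small and d x y close to M x; hence the sublevel sets Gamma(M)(eps)
   recover M as M^-(F(M)), and F2 together with F3 applied to max_i d x_i
   yields flatness of F(M).  The adjunction is then formal. *)

From mathcomp Require Import all_boot all_order all_algebra.
From mathcomp Require Import all_classical all_reals ereal.
Import Order.TTheory GRing.Theory Num.Theory.
Set Implicit Arguments. Unset Strict Implicit. Unset Printing Implicit Defensive.
Local Open Scope classical_set_scope.
Local Open Scope ereal_scope.

Section ExtendedNonnegatives.
Context {R : realType}.
Implicit Types (r : R) (a b v y z : \bar R).

Lemma lee_addgt0_muln a b k :
  (forall e : R, (0 < e)%R -> a <= b + (e *+ k.+1)%:E) -> a <= b.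
Proof.
move=> H; apply/lee_addgt0Pr => e e0.
have k0 : (0 < k.+1%:R :> R)%R by rewrite ltr0n.
have := H (e / k.+1%:R)%R (divr_gt0 e0 k0).
suff -> : ((e / k.+1%:R) *+ k.+1 = e)%R by [].
by rewrite -mulr_natr divfK // gt_eqF.
Qed.

Lemma ehom_pinfty y : ehom +oo y = 0.
Proof. by rewrite /ehom eqxx. Qed.

Lemma ehom_ge0 v y : 0 <= ehom v y.
Proof. by rewrite /ehom; case: ifP => // _; case: ifP => // _; rewrite le_max lexx orbT. Qed.

Lemma ehom_leP r y z : 0 <= z -> (ehom r%:E y <= z) <-> (y <= r%:E + z).
Proof.
rewrite /ehom /=; case: y => [s| |] /=; case: z => [t| |] //= z0.
- rewrite -EFinB -EFin_max -EFinD !lee_fin ge_max; rewrite lee_fin in z0.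
  by rewrite lerBlDl z0 andbT.
- by split => _; rewrite ?leey.
- by split => _; [rewrite leNye | rewrite /= ge_max leNye z0].
- by split => _; rewrite ?leNye ?leey.
Qed.

Lemma ehomxx r : ehom r%:E r%:E = 0.
Proof. by rewrite /ehom /= -EFinB subrr -EFin_max maxxx. Qed.

Lemma lee_ehom2l v y (y' : \bar R) : 0 <= v -> y <= y' -> ehom v y <= ehom v y'.
Proof.
case: v => [r| |] v0 yy'; [|by rewrite !ehom_pinfty|by []].
apply/ehom_leP; first exact: ehom_ge0.
by apply: le_trans yy' _; apply/ehom_leP => //; exact: ehom_ge0.
Qed.

Lemma lee_ehomDl v a b : 0 <= v -> 0 <= a -> ehom v (a + b) <= a + ehom v b.
Proof.
case: v => [r| |] v0 a0; [|by rewrite !ehom_pinfty adde_ge0 // ehom_ge0|by []].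
apply/ehom_leP; first by rewrite adde_ge0 // ehom_ge0.
by rewrite addeCA leeD2l //; apply/ehom_leP => //; exact: ehom_ge0.
Qed.

Lemma le_fmax n (e : 'I_n -> \bar R) i : e i <= fmax e.
Proof. exact: le_bigmax. Qed.

Lemma fmax_le n (e : 'I_n -> \bar R) z : 0 <= z -> (forall i, e i <= z) -> fmax e <= z.
Proof. by move=> z0 h; apply: bigmax_le. Qed.

Lemma fmax_ge0 n (e : 'I_n -> \bar R) : 0 <= fmax e.
Proof. by rewrite /fmax; elim/big_rec: _ => // i x _ x0; rewrite le_max x0 orbT. Qed.

End ExtendedNonnegatives.

Section Infimum.
Context {R : realType} {A : Type}.
Implicit Types (M f : A -> \bar R) (z : \bar R).

Lemma einf_le f x : einf f <= f x.
Proof. exact: ereal_inf_lbound. Qed.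

Lemma einf_ge f z : (forall x, z <= f x) -> z <= einf f.
Proof. by move=> h; apply: le_ereal_inf_tmp => _ [x _ <-]. Qed.

Lemma einf_lt f z : einf f < z -> exists x, f x < z.
Proof. by case/ereal_inf_lt => _ [x _ <-]; exists x. Qed.

Lemma einf_adherent f (e : R) : (0 < e)%R -> einf f \is a fin_num ->
  exists x, f x < einf f + e%:E.
Proof. by move=> e0 /(lb_ereal_inf_adherent e0) [_ [x _ <-]]; exists x. Qed.

Lemma einf_add_ehom_ge M (N : A -> \bar R) v : 0 <= v -> (forall x, 0 <= M x) ->
  ehom v (einf (fun x => M x + N x)) <= einf (fun x => M x + ehom v (N x)).
Proof.
move=> v0 M0; apply: einf_ge => x; apply: le_trans (lee_ehomDl _ v0 (M0 x)).
by apply: lee_ehom2l => //; exact: einf_le (fun x => M x + N x) x.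
Qed.

Lemma einf_add_fmax_ge n M (N : 'I_n -> A -> \bar R) : (forall x, 0 <= M x) ->
  fmax (fun i => einf (fun x => M x + N i x)) <=
  einf (fun x => M x + fmax (fun i => N i x)).
Proof.
move=> M0; apply: einf_ge => x; apply: fmax_le => [|i].
  by rewrite adde_ge0 // fmax_ge0.
by apply: le_trans (einf_le _ x) _; rewrite leeD2l // (le_fmax (fun i => N i x)).
Qed.

End Infimum.

Section Flatness.
Context {R : realType} {A : Type} (d : A -> A -> \bar R).
Hypothesis d_ge0 : forall x y, 0 <= d x y.
Hypothesis d_refl : forall x, d x x = 0.
Hypothesis d_triangle : forall x y z, d x z <= d x y + d y z.
Implicit Types (F : set (set A)) (f g : set A) (M N : A -> \bar R).

Lemma rightmod_dist x : rightmod d (d x).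
Proof. by split => // y z; rewrite addeC. Qed.

Lemma einf_add_dist M x : leftmod d M -> einf (fun y => M y + d x y) = M x.
Proof.
move=> [_ hM]; apply: le_anti; rewrite einf_ge // andbT.
by apply: le_trans (einf_le _ x) _; rewrite d_refl adde0.
Qed.

Lemma le_Mminus F f x : F f -> ereal_inf [set d x y | y in f] <= Mminus d F x.
Proof. by move=> Ff; apply: ereal_sup_ubound; exists f. Qed.

Lemma Mminus_le F x z :
  (forall f, F f -> ereal_inf [set d x y | y in f] <= z) -> Mminus d F x <= z.
Proof. by move=> h; apply: ge_ereal_sup => _ [f Ff <-]; exact: h. Qed.

Lemma Mminus_approx F f x (e : R) : F f -> Mminus d F x \is a fin_num -> (0 < e)%R ->
  exists z, f z /\ d x z <= Mminus d F x + e%:E.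
Proof.
move=> Ff fin e0.
have : ereal_inf [set d x y | y in f] < Mminus d F x + e%:E.
  by apply: le_lt_trans (le_Mminus x Ff) _; rewrite lteDl.
by case/ereal_inf_lt => _ [z fz <-] /ltW; exists z.
Qed.

Lemma Mminus_ge0 F x : is_filter F -> 0 <= Mminus d F x.
Proof.
case=> [[f Ff] _ _ _]; apply: le_trans (le_Mminus x Ff).
by apply: le_ereal_inf_tmp => _ [y _ <-].
Qed.

Lemma Mminus_antitone F1 F2 : F2 `<=` F1 -> mimpl (Mminus d F1) (Mminus d F2).
Proof. by move=> s x; apply: ereal_sup_le => _ [f Ff <-]; exists f => //; exact: s. Qed.

Lemma leftmod_Mminus F : is_filter F -> leftmod d (Mminus d F).
Proof.
move=> hF; split=> [x|x y]; first exact: Mminus_ge0.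
have := Mminus_ge0 y hF; have := d_ge0 x y.
case Edxy: (d x y) => [r| |] //= _ My0; last first.
  by rewrite addey ?leey //; case: (Mminus d F y) My0.
case EMy: (Mminus d F y) My0 => [s| |] //= _; last by rewrite addye ?leey.
apply/lee_addgt0Pr => e e0; apply: Mminus_le => f Ff.
have Myfin : Mminus d F y \is a fin_num by rewrite EMy.
have [z [fz hz]] := Mminus_approx Ff Myfin e0.
apply: le_trans (ereal_inf_lbound _) _; first by exists z.
apply: le_trans (d_triangle x y z) _; rewrite Edxy -EMy addeAC addeC.
exact: leeD2l.
Qed.

Definition Mminus_vanishes F := forall e : R, (0 < e)%R ->
  exists2 f, F f & forall x, f x -> Mminus d F x <= e%:E.

Lemma weakly_flat_vanishes F : weakly_flat d F -> Mminus_vanishes F.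
Proof.
move=> [_ lim] e e0.
have : limplus F (Mminus d F) < e%:E by rewrite lim lte_fin.
case/ereal_inf_lt => _ [f Ff <-] lt; exists f => // x fx.
by apply: le_trans (ltW lt); apply: ereal_sup_ubound; exists x.
Qed.

Lemma Mminus_le_on_flat_set F f (e : R) :
  (forall n (xs : 'I_n -> A), (forall i, f (xs i)) ->
      forall g, F g -> exists y, g y /\ forall i, d (xs i) y <= e%:E) ->
  forall x, f x -> Mminus d F x <= e%:E.
Proof.
move=> H x fx; apply: Mminus_le => g Fg.
have [y [gy hy]] := H 1%N (fun _ => x) (fun _ => fx) g Fg.
by apply: le_trans (ereal_inf_lbound _) (hy ord0); exists y.
Qed.

Lemma flat_vanishes F : flat d F -> Mminus_vanishes F.
Proof.
move=> [_ fl] e /fl [f [Ff H]].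
by exists f => //; exact: Mminus_le_on_flat_set H.
Qed.

(* Moving a near-minimiser of M^-(F) + N into f costs e twice: once to
   approach the infimum, once to reach a point of f. *)
Lemma near_inf_Mminus_add F N f (e : R) : is_filter F -> rightmod d N -> F f ->
  (0 < e)%R -> einf (fun x => Mminus d F x + N x) \is a fin_num ->
  exists z, f z /\ N z <= einf (fun x => Mminus d F x + N x) + (e *+ 2)%:E.
Proof.
move=> hF [N0 hN] Ff e0 cfin; set c := einf _ in cfin *.
have [x' hx'] := einf_adherent e0 cfin.
have Mfin : Mminus d F x' \is a fin_num.
  move: hx'; case: (Mminus d F x') (Mminus_ge0 x' hF) => [s| |] //= _.
  by rewrite addye ?ltNge ?leey //; case: (N x') (N0 x').
have [z [fz hz]] := Mminus_approx Ff Mfin e0.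
exists z; split => //; apply: le_trans (hN x' z) _.
apply: le_trans (leeD2r _ hz) _; rewrite addeAC mulr2n EFinD addeA.
by rewrite leeD2r // ltW.
Qed.

Section VanishingFilter.
Variable F : set (set A).
Hypotheses (hF : is_filter F) (hvan : Mminus_vanishes F).

Lemma F1_Mminus : F1 (Mminus d F).
Proof.
apply: le_anti; rewrite einf_ge ?andbT => [|x]; last exact: Mminus_ge0.
apply/lee_addgt0Pr => e /hvan [f Ff H]; rewrite add0e.
case: hF => _ hne _ _; have [z fz] := hne f Ff.
by apply: le_trans (einf_le _ z) (H z fz).
Qed.

Lemma F3_Mminus : F3 d (Mminus d F).
Proof.
move=> v N v0 hN; case: v v0 => [r| |] // v0; last first.
  rewrite ehom_pinfty -F1_Mminus; congr einf.
  by apply/funext => x; rewrite ehom_pinfty adde0.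
apply: le_anti; rewrite einf_add_ehom_ge ?andbT //; last by move=> x; exact: Mminus_ge0.
have c0 : 0 <= einf (fun x => Mminus d F x + N x).
  by apply: einf_ge => x; apply: adde_ge0; [exact: Mminus_ge0 | exact: hN.1].
case Ec: (einf _) c0 => [s| |] //= _; last by rewrite leey.
apply: (@lee_addgt0_muln _ _ _ 2) => e e0.
have [f Ff H] := hvan e0.
have cfin : einf (fun x => Mminus d F x + N x) \is a fin_num by rewrite Ec.
have [z [fz]] := near_inf_Mminus_add hF hN Ff e0 cfin; rewrite Ec => hz.
have hz' : ehom r%:E (N z) <= (e *+ 2)%:E + ehom r%:E s%:E.
  apply: le_trans (lee_ehomDl _ v0 _); first by apply: lee_ehom2l; rewrite // addeC.
  by rewrite lee_fin mulrn_wge0 // ltW.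
apply: le_trans (einf_le _ z) _; apply: le_trans (leeD (H z fz) hz') _.
by rewrite addeA -EFinD -mulrS addeC.
Qed.

End VanishingFilter.

Lemma F2_Mminus F : flat d F -> F2 d (Mminus d F).
Proof.
move=> [hF fl] n N hN.
have M0 x := Mminus_ge0 x hF.
apply: le_anti; rewrite einf_add_fmax_ge ?andbT //.
set c := fun i => einf (fun x => Mminus d F x + N i x).
have c0 i : 0 <= c i by apply: einf_ge => x; rewrite adde_ge0 ?(hN i).1.
case: (fmax c) (fmax_ge0 c) (le_fmax c) => [m| |] // m0 cm; last by rewrite leey.
have cfin i : c i \is a fin_num.
  by case: (c i) (c0 i) (cm i).
apply: (@lee_addgt0_muln _ _ _ 3) => e e0.
have [f [Ff Hf]] := fl e e0.
have [z Hz] := choice (fun i => near_inf_Mminus_add hF (hN i) Ff e0 (cfin i)).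
have [y [fy hy]] := Hf n z (fun i => (Hz i).1) f Ff.
apply: le_trans (einf_le _ y) _.
have Ny : fmax (fun i => N i y) <= m%:E + (e *+ 3)%:E.
  apply: fmax_le => [|i]; first by rewrite adde_ge0 // lee_fin mulrn_wge0 // ltW.
  apply: le_trans ((hN i).2 (z i) y) _; apply: le_trans (leeD (hy i) (Hz i).2) _.
  by rewrite addeCA -EFinD -mulrS; apply: leeD2r; exact: cm.
apply: le_trans (leeD (Mminus_le_on_flat_set Hf fy) Ny) _.
by rewrite addeCA -EFinD -mulrS.
Qed.

Lemma is_filter_FM M : F1 M -> is_filter (FM M).
Proof.
move=> hF1; split.
- by exists setT; exists 1%R.
- move=> g [e [e0 sub]].
  have : einf M < e%:E by rewrite hF1 lte_fin.
  by case/einf_lt => x /ltW Mx; exists x; exact: sub.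
- move=> f g [e1 [e10 s1]] [e2 [e20 s2]].
  exists (Num.min e1 e2); split; first by rewrite lt_min e10 e20.
  move=> x Gx; split; [apply: s1 | apply: s2]; apply: le_trans Gx _;
    by rewrite lee_fin ge_min lexx ?orbT.
- by move=> f g [e [e0 s]] fg; exists e; split => //; exact: subset_trans s fg.
Qed.

Lemma FM_antitone M1 M2 : mimpl M1 M2 -> FM M2 `<=` FM M1.
Proof.
move=> imp g [e [e0 s]]; exists e; split => // x Gx; apply: s.
exact: le_trans (imp x) Gx.
Qed.

Lemma leftmod_le_inf_Gamma M x (e : R) : leftmod d M -> (0 < e)%R ->
  M x <= ereal_inf [set d x y | y in Gamma M e] + e%:E.
Proof.
move=> [_ hM] e0; rewrite -leeBlDr //; apply: le_ereal_inf_tmp => _ [y Gy <-].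
by rewrite leeBlDr //; apply: le_trans (hM x y) _; rewrite addeC leeD2l.
Qed.

Lemma Mminus_ge_of_FM_sub F M : leftmod d M -> FM M `<=` F -> mimpl (Mminus d F) M.
Proof.
move=> hM sub x; apply/lee_addgt0Pr => e e0.
apply: le_trans (leftmod_le_inf_Gamma x hM e0) _; rewrite leeD2r //.
by apply: le_Mminus; apply: sub; exists e; split.
Qed.

Lemma FM_sub_of_Mminus_ge F M : is_filter F -> Mminus_vanishes F ->
  mimpl (Mminus d F) M -> FM M `<=` F.
Proof.
move=> [_ _ _ hsup] hvan imp g [e [/hvan [f Ff H] s]].
by apply: (hsup f) => // x fx; apply: s; exact: le_trans (imp x) (H x fx).
Qed.

Lemma F1_of_F3 M : F3 d M -> F1 M.
Proof.
move=> hF3; have hN : rightmod d (fun _ : A => 0) by split => // x y; rewrite adde0.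
have := hF3 +oo (fun _ => 0) (leey _) hN; rewrite !ehom_pinfty /F1 => <-.
by congr einf; apply/funext => x; rewrite adde0.
Qed.

(* F3 with v := inf (M + N) makes inf_y (M y + [v, N y]) vanish. *)
Lemma F3_witness M N (r eta : R) : (forall x, 0 <= M x) -> F3 d M -> rightmod d N ->
  einf (fun x => M x + N x) = r%:E -> (0 < eta)%R ->
  exists y, M y <= eta%:E /\ N y <= (r + eta)%:E.
Proof.
move=> M0 hF3 hN Er eta0.
have r0 : 0 <= r%:E.
  by rewrite -Er; apply: einf_ge => x; rewrite adde_ge0 ?M0 ?hN.1.
have := hF3 _ _ r0 hN; rewrite Er ehomxx => key.
have /einf_lt [y /ltW lt] : einf (fun x => M x + ehom r%:E (N x)) < eta%:E.
  by rewrite key lte_fin.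
exists y; split; first by apply: le_trans _ lt; rewrite leeDl // ehom_ge0.
have eta_ge0 : 0 <= eta%:E by rewrite lee_fin ltW.
rewrite EFinD; apply/(ehom_leP _ _ eta_ge0).
by apply: le_trans _ lt; rewrite leeDr ?M0.
Qed.

Lemma Mminus_FM M : leftmod d M -> F3 d M -> Mminus d (FM M) = M.
Proof.
move=> hM hF3; apply/funext => x; apply: le_anti.
rewrite Mminus_ge_of_FM_sub // andbT.
case Em: (M x) (hM.1 x) => [m| |] //= _; last by rewrite leey.
apply/lee_addgt0Pr => e e0; apply: Mminus_le => g [del [del0 sub]].
have eta0 : (0 < Num.min del e)%R by rewrite lt_min del0 e0.
have [y [My dxy]] := F3_witness hM.1 hF3 (rightmod_dist x)
  (etrans (einf_add_dist x hM) Em) eta0.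
apply: le_trans (ereal_inf_lbound _) _.
  by exists y => //; apply: sub; apply: le_trans My _; rewrite lee_fin ge_min lexx.
by apply: le_trans dxy _; rewrite EFinD leeD2l // lee_fin ge_min lexx orbT.
Qed.

Lemma weakly_flat_FM M : leftmod d M -> F3 d M -> weakly_flat d (FM M).
Proof.
move=> hM hF3; have hF := is_filter_FM (F1_of_F3 hF3).
split => //; rewrite Mminus_FM //; apply: le_anti; apply/andP; split.
- apply/lee_addgt0Pr => e e0; rewrite add0e; apply: ge_ereal_inf.
  exists (ereal_sup (M @` Gamma M e)); first by exists (Gamma M e) => //; exists e; split.
  by apply: ge_ereal_sup => _ [y Gy <-].
- apply: le_ereal_inf_tmp => _ [g Fg <-].
  case: hF => _ hne _ _; have [y gy] := hne g Fg.
  by apply: le_trans (hM.1 y) _; apply: ereal_sup_ubound; exists y.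
Qed.

Lemma flat_FM M : P2flat d M -> flat d (FM M).
Proof.
case=> hM hF2 hF3; split; first exact: is_filter_FM (F1_of_F3 hF3).
move=> e e0; have e20 : (0 < e / 2)%R by rewrite divr_gt0.
exists (Gamma M (e / 2)); split; first by exists (e / 2)%R; split.
move=> n xs hxs g [del [del0 sub]].
pose N z := fmax (fun i => d (xs i) z).
have hN : rightmod d N.
  split=> [z|w z]; first exact: fmax_ge0.
  apply: fmax_le => [|i]; first by rewrite adde_ge0 // fmax_ge0.
  apply: le_trans (d_triangle (xs i) w z) _; rewrite addeC leeD2l //.
  exact: (le_fmax (fun i => d (xs i) w)).
have m0 : 0 <= fmax (fun i => M (xs i)) by exact: fmax_ge0.
have mle : fmax (fun i => M (xs i)) <= (e / 2)%:E.
  by apply: fmax_le => [|i]; [rewrite lee_fin ltW | exact: hxs].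
case Em: (fmax (fun i => M (xs i))) m0 mle => [m| |] //= m0 mle.
have Einf : einf (fun x => M x + N x) = m%:E.
  rewrite -Em hF2 //; last by move=> i; exact: rightmod_dist.
  by congr fmax; apply/funext => i; exact: einf_add_dist.
have eta0 : (0 < Num.min del (e / 2))%R by rewrite lt_min del0 e20.
have [y [My Ny]] := F3_witness hM.1 hF3 hN Einf eta0.
exists y; split.
  by apply: sub; apply: le_trans My _; rewrite lee_fin ge_min lexx.
move=> i; apply: le_trans (le_fmax (fun i => d (xs i) y) i) _.
apply: le_trans Ny _; rewrite lee_fin [X in (_ <= X)%R]splitr lerD //.
by rewrite ge_min lexx orbT.
Qed.

Lemma P1flat_Mminus F : weakly_flat d F -> P1flat d (Mminus d F).
Proof.
move=> wF; have [hF _] := wF; have hvan := weakly_flat_vanishes wF.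
by split; [exact: leftmod_Mminus | exact: F1_Mminus | exact: F3_Mminus].
Qed.

Lemma P2flat_Mminus F : flat d F -> P2flat d (Mminus d F).
Proof.
move=> fF; have [hF _] := fF; have hvan := flat_vanishes fF.
by split; [exact: leftmod_Mminus | exact: F2_Mminus | exact: F3_Mminus].
Qed.

Lemma FM_sub_iff F M : weakly_flat d F -> leftmod d M ->
  FM M `<=` F <-> mimpl (Mminus d F) M.
Proof.
move=> wF hM; split; first exact: Mminus_ge_of_FM_sub.
by apply: FM_sub_of_Mminus_ge; [exact: wF.1 | exact: weakly_flat_vanishes].
Qed.

Lemma mimpl_of_FM_sub M1 M2 : P1flat d M1 -> P1flat d M2 ->
  FM M2 `<=` FM M1 -> mimpl M1 M2.
Proof.
move=> [hM1 _ hF1] [hM2 _ hF2] sub.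
by rewrite -(Mminus_FM hM1 hF1) -(Mminus_FM hM2 hF2); exact: Mminus_antitone.
Qed.

Lemma FM_inj M1 M2 : P1flat d M1 -> P1flat d M2 -> FM M1 = FM M2 -> M1 = M2.
Proof.
move=> h1 h2 E; apply/funext => x; apply: le_anti.
by rewrite (mimpl_of_FM_sub h2 h1) ?(mimpl_of_FM_sub h1 h2) ?E.
Qed.

End Flatness.

Theorem mainTheorem8 (R : realType) (A : Type) (d : A -> A -> \bar R)
  (hd : gmetric d) :
  (* (a) *)
  ((forall F, weakly_flat d F -> P1flat d (Mminus d F)) /\
   (forall F, flat d F -> P2flat d (Mminus d F))) /\
  (* (b) *)
  ((forall M, P1flat d M -> weakly_flat d (FM M)) /\
   (forall M, P2flat d M -> flat d (FM M))) /\
  (* (c) *)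
  ((forall F1 F2, is_filter F1 -> is_filter F2 -> F2 `<=` F1 ->
      mimpl (Mminus d F1) (Mminus d F2)) /\
   (forall M1 M2, leftmod d M1 -> leftmod d M2 -> mimpl M1 M2 ->
      FM M2 `<=` FM M1)) /\
  (* (d) *)
  (forall F M, weakly_flat d F -> leftmod d M ->
     (FM M `<=` F <-> mimpl (Mminus d F) M)) /\
  (* (e) *)
  (forall M, P1flat d M -> Mminus d (FM M) = M) /\
  (* consequence: the right adjoint M |-> F(M) is full and injective *)
  (forall M1 M2, P1flat d M1 -> P1flat d M2 ->
     (FM M2 `<=` FM M1 -> mimpl M1 M2) /\ (FM M1 = FM M2 -> M1 = M2)).
Proof.
case: hd => d_ge0 d_refl d_triangle.
split; [split | split; [split | split; [split | split; [| split]]]].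
- exact: P1flat_Mminus.
- exact: P2flat_Mminus.
- by move=> M [hM _ hF3]; exact: weakly_flat_FM.
- exact: flat_FM.
- by move=> F1 F2 _ _; exact: Mminus_antitone.
- by move=> M1 M2 _ _; exact: FM_antitone.
- exact: FM_sub_iff.
- by move=> M [hM _ hF3]; exact: Mminus_FM.
- by move=> M1 M2 h1 h2; split; [exact: mimpl_of_FM_sub | exact: FM_inj].
Qed.
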